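(* Fix $d\ge1$ and a finite set $C$ of colours. There is a simple interpretation $J=(\nu(x),\eta(x,y))$ given by first-order formulas such that for every graph $G$ having a tree-model $T$ of depth $d$ with colours from $C$, $G\simeq T_1^J$, where $T_1$ is the labelled tree associated with $T$ as described below. That is, a shrub interpretation is FO definable for each fixed $d$.
   Context: A graph $G$ has a tree-model of $m$ colours and depth $d$ if there is a rooted tree $T$ such that: the set of leaves of $T$ is exactly $V(G)$; every root-to-leaf path has length exactly $d$; each leaf is assigned one of $m$ colours; and whether $uv\in E(G)$ depends solely on the colours of $u,v$ and the distance between $u,v$ in $T$. For such $T$, the labelled tree $T_1$ is $T$ with the leaf colours as labels, where additionally each leaf $v$ gets every label $(i,c)$ such that some vertex $u$ of colour $c$ adjacent to $v$ in $G$ has distance $2i$ from $v$ in $T$. A simple interpretation $(\nu,\eta)$ assigns to a labelled tree $T_1$ the graph $T_1^J$ with vertex set $\{a:T_1\models\nu(a)\}$ and edge set $\{ab: T_1\models\eta(a,b)\}$; a shrub interpretation is such an interpretation with $T_1^J\simeq G$, the vertices being the leaves. *)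

From mathcomp Require Import all_boot.
Set Implicit Arguments. Unset Strict Implicit. Unset Printing Implicit Defensive.

Definition rooted_tree (V : finType) (r : V) (p : V -> V) : Prop :=
  p r = r /\ forall v : V, exists k, iter k p v = r.

Definition parent_of (V : finType) (r : V) (p : V -> V) (x y : V) : Prop :=
  x <> r /\ p x = y.

Definition is_leaf (V : finType) (r : V) (p : V -> V) (v : V) : Prop :=
  forall u : V, ~ parent_of r p u v.

Definition has_depth (V : finType) (r : V) (p : V -> V) (v : V) (n : nat) : Prop :=
  iter n p v = r /\ forall k, k < n -> iter k p v <> r.

Definition tree_dist (V : finType) (p : V -> V) (u v : V) (n : nat) : Prop :=
  (exists k l, k + l = n /\ iter k p u = iter l p v) /\
  (forall k l, iter k p u = iter l p v -> n <= k + l).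

Definition tree_model (d : nat) (C W : finType) (e : rel W)
    (V : finType) (r : V) (p : V -> V) (f : W -> V) (col : W -> C) : Prop :=
  [/\ rooted_tree r p,
      injective f,
      (forall v : V, is_leaf r p v <-> exists x, f x = v),
      (forall v : V, is_leaf r p v -> has_depth r p v d) &
      exists M : C -> C -> nat -> bool,
        forall x y : W, x != y -> forall n, tree_dist p (f x) (f y) n ->
          e x y = M (col x) (col y) n].

Definition label (d : nat) (C : finType) : Type := (C + ('I_d.+1 * C))%type.

Definition T1_label (d : nat) (C W : finType) (e : rel W)
    (V : finType) (p : V -> V) (f : W -> V) (col : W -> C)
    (v : V) (l : label d C) : Prop :=
  match l with
  | inl c => exists x, f x = v /\ col x = c
  | inr (i, c) => exists x, f x = v /\
        exists u, col u = c /\ e x u /\ tree_dist p (f x) (f u) (2 * i)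
  end.

Inductive formula (L : Type) : Type :=
  | FPar of nat & nat            (* FPar x y : y is the parent of x *)
  | FEq of nat & nat
  | FLab of L & nat
  | FFalse
  | FNot of formula L
  | FAnd of formula L & formula L
  | FOr of formula L & formula L
  | FEx of nat & formula L.

Fixpoint sat (L : Type) (V : finType) (r : V) (p : V -> V) (lab : V -> L -> Prop)
    (env : nat -> V) (phi : formula L) : Prop :=
  match phi with
  | FPar x y => parent_of r p (env x) (env y)
  | FEq x y => env x = env y
  | FLab l x => lab (env x) l
  | FFalse => False
  | FNot psi => ~ sat r p lab env psi
  | FAnd a b => sat r p lab env a /\ sat r p lab env b
  | FOr a b => sat r p lab env a \/ sat r p lab env b
  | FEx x psi => exists v : V, sat r p lab (fun n => if n == x then v else env n) psi
  end.

(* environment assigning a to variable 0 and b to all other variables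
   (formulas nu(x), eta(x,y) use variables 0 = x and 1 = y). *)
Definition env2 (V : Type) (a b : V) : nat -> V :=
  fun n => if n is 0 then a else b.

(* The vertices of G are exactly the leaves of T_1 carrying a colour label.
   For leaves x, y at common depth d, dist(x, y) = 2i where i is the least
   level at which their ancestors meet, which is first-order expressible with
   at most d quantifiers.  Since adjacency depends only on the colours and the
   distance, x ~ y holds iff x carries the label (i, col y) with
   2i = dist(x, y): the witness u of that label has the same colour and
   distance from x as y. *)
From mathcomp Require Import all_boot zify.
Set Implicit Arguments. Unset Strict Implicit.

(* [anc_formula b i s t]: the variable [t] holds the [i]-th ancestor of [s],
   reached by [i] genuine parent steps; the intermediate nodes are bound to
   the variables [b + 1, ..., b + i], which must differ from [s] and [t]. *)
Fixpoint anc_formula (L : Type) (b i s t : nat) : formula L :=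
  match i with
  | 0 => FEq L s t
  | i'.+1 => FEx (b + i) (FAnd (FPar L s (b + i)) (anc_formula L b i' (b + i) t))
  end.

Lemma sat_anc_formula (L : Type) (V : finType) (r : V) (p : V -> V)
    (lab : V -> L -> Prop) b i env s t :
  t <= b -> s <= b \/ b + i < s ->
  sat r p lab env (anc_formula L b i s t) <->
  (forall j, j < i -> iter j p (env s) <> r) /\ iter i p (env s) = env t.
Proof.
elim: i env s t => [|i IH] env s t Ht Hs /=.
  by split; [move=> ->|case].
have [Hs' Ht'] : (s == b + i.+1) = false /\ (t == b + i.+1) = false.
  by split; apply/eqP; lia.
have bi : b + i < b + i.+1 by rewrite addnS.
have IHv v :
    sat r p lab (fun n => if n == b + i.+1 then v else env n)
      (anc_formula L b i (b + i.+1) t) <->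
    (forall j, j < i -> iter j p v <> r) /\ iter i p v = env t.
  by rewrite (IH _ _ _ Ht (or_intror bi)) eqxx Ht'.
split.
- move=> [v [[Hr]]]; rewrite /= Hs' eqxx => Hp /IHv [H1 H2]; split.
    by case=> [|j] Hj; [rewrite Hs' in Hr|rewrite iterSr Hp; apply: H1].
  by rewrite -iterS iterSr Hp.
- move=> [H1 H2]; exists (p (env s)); rewrite /= Hs' eqxx; split.
    by split => //; apply: (H1 0).
  apply/IHv; split; last by rewrite -iterSr.
  by move=> j Hj; rewrite -iterSr; apply: H1.
Qed.

Definition same_anc_formula (L : Type) (i : nat) : formula L :=
  FEx 2 (FAnd (anc_formula L 2 i 0 2) (anc_formula L 2 i 1 2)).

Definition bigFOr (L T : Type) (g : T -> formula L) (s : seq T) : formula L :=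
  foldr (fun x acc => FOr (g x) acc) (FFalse L) s.

Lemma sat_bigFOr (L : Type) (T : eqType) (V : finType) (r : V) (p : V -> V)
    (lab : V -> L -> Prop) env (g : T -> formula L) (s : seq T) :
  sat r p lab env (bigFOr g s) <-> exists2 x, x \in s & sat r p lab env (g x).
Proof.
elim: s => [|x s IH] /=; first by split => // -[].
rewrite IH; split.
- by case=> [H|[y Hy H]]; [exists x; rewrite ?mem_head|exists y; rewrite // inE Hy orbT].
- by move=> [y]; rewrite inE => /orP[/eqP->|Hy] H; [left|right; exists y].
Qed.

Lemma iter_eq_mono (V : Type) (p : V -> V) a b k m :
  iter k p a = iter k p b -> k <= m -> iter m p a = iter m p b.
Proof. by move=> E /subnK <-; rewrite !iterD E. Qed.

Lemma tree_dist_uniq (V : finType) (p : V -> V) a b n m :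
  tree_dist p a b n -> tree_dist p a b m -> n = m.
Proof.
move=> [[k [l [<- E]]] Hn] [[k' [l' [<- E']]] Hm].
by apply/eqP; rewrite eqn_leq Hn // Hm.
Qed.

Section LeavesAtDepth.
Variables (V : finType) (r : V) (p : V -> V) (d : nat).
Hypothesis p_root : p r = r.
Variables a b : V.
Hypotheses (depth_a : has_depth r p a d) (depth_b : has_depth r p b d).

Lemma iter_root n : iter n p r = r.
Proof. by elim: n => //= n ->. Qed.

Lemma iter_depth_ge v k : has_depth r p v d -> d <= k -> iter k p v = r.
Proof. by move=> [Hv _] /subnK <-; rewrite iterD Hv iter_root. Qed.

(* Neither leaf reaches the root before level [d], so equal ancestors at levels
   [k] and [l] force [k = l] unless both lie at or above level [d]. *)
Lemma tree_dist_first_meet j :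
  iter j p a = iter j p b -> (forall k, iter k p a = iter k p b -> j <= k) ->
  tree_dist p a b (2 * j).
Proof.
move: depth_a depth_b => [Ad Ha] [Bd Hb] Hj Hmin; split.
  by exists j, j; split => //; lia.
have jd : j <= d by apply: Hmin; rewrite Ad Bd.
move=> k l E.
have [Hk|Hk] := ltnP k d; have [Hl|Hl] := ltnP l d; last lia.
- case: (ltngtP k l) => Hkl; last by move: E; rewrite Hkl => /Hmin; lia.
  + by exfalso; apply: (Ha (d - l + k)); [lia|rewrite iterD E -iterD subnK ?(ltnW Hl)].
  + by exfalso; apply: (Hb (d - k + l)); [lia|rewrite iterD -E -iterD subnK ?(ltnW Hk)].
- by exfalso; apply: (Ha k Hk); rewrite E; apply: iter_depth_ge.
- by exfalso; apply: (Hb l Hl); rewrite -E; apply: iter_depth_ge.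
Qed.

Lemma first_meet_exists : exists j,
  iter j p a = iter j p b /\ forall k, iter k p a = iter k p b -> j <= k.
Proof.
have exP : exists k, iter k p a == iter k p b.
  by exists d; rewrite (proj1 depth_a) (proj1 depth_b).
have [j /eqP Hj Hmin] := ex_minnP exP.
by exists j; split => // k /eqP; apply: Hmin.
Qed.

Lemma tree_dist_leaves_exists : exists2 j, j <= d & tree_dist p a b (2 * j).
Proof.
have [j [Hj Hmin]] := first_meet_exists.
exists j; first by apply: Hmin; rewrite (proj1 depth_a) (proj1 depth_b).
exact: tree_dist_first_meet.
Qed.

Lemma tree_dist_leavesE i : a != b ->
  tree_dist p a b (2 * i) <->
  iter i p a = iter i p b /\ iter i.-1 p a <> iter i.-1 p b.
Proof.
move=> /eqP ab; split.
- have [j [Hj Hmin]] := first_meet_exists.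
  move=> /(tree_dist_uniq (tree_dist_first_meet Hj Hmin)) /eqP.
  rewrite eqn_mul2l /= => /eqP <-; split => // /Hmin.
  by case: j Hj {Hmin} => //= j _; lia.
- move=> [Ei Ni]; apply: tree_dist_first_meet => // k Ek.
  rewrite leqNgt; apply/negP => ki; apply: Ni; apply: (iter_eq_mono Ek); lia.
Qed.

Lemma sat_same_anc_formula (L : Type) (lab : V -> L -> Prop) i : i <= d ->
  sat r p lab (env2 a b) (same_anc_formula L i) <-> iter i p a = iter i p b.
Proof.
move: depth_a depth_b => [_ Ha] [_ Hb] Hi /=.
have sat_anc env v (v2 : v <= 2) :=
  @sat_anc_formula L V r p lab 2 i env v 2 (leqnn 2) (or_introl v2).
split.
- by move=> [z [/(sat_anc _ 0 isT) [_ /= ->] /(sat_anc _ 1 isT) [_ /= ->]]].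
- move=> E; exists (iter i p a); split.
    by apply/(sat_anc _ 0 isT); split=> //= j Hj; apply: Ha; lia.
  by apply/(sat_anc _ 1 isT); split=> //= j Hj; apply: Hb; lia.
Qed.

End LeavesAtDepth.

Definition vertex_formula (d : nat) (C : finType) : formula (label d C) :=
  bigFOr (fun c : C => FLab (inl c : label d C) 0) (enum C).

Definition edge_formula (d : nat) (C : finType) : formula (label d C) :=
  bigFOr (fun ic : 'I_d.+1 * C =>
    FAnd (FLab (inr ic : label d C) 0)
      (FAnd (FLab (inl ic.2 : label d C) 1)
        (FAnd (same_anc_formula (label d C) ic.1)
          (FNot (same_anc_formula (label d C) ic.1.-1)))))
    (enum [set: 'I_d.+1 * C]).

Lemma sat_vertex_formula (d : nat) (C : finType) (V : finType) (r : V)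
    (p : V -> V) (lab : V -> label d C -> Prop) a :
  sat r p lab (env2 a a) (vertex_formula d C) <-> exists c, lab a (inl c).
Proof.
rewrite sat_bigFOr; split; first by move=> [c _ H]; exists c.
by move=> [c H]; exists c; rewrite ?mem_enum.
Qed.

Lemma sat_edge_formula (d : nat) (C : finType) (V : finType) (r : V)
    (p : V -> V) (lab : V -> label d C -> Prop) a b :
  p r = r -> has_depth r p a d -> has_depth r p b d -> a != b ->
  sat r p lab (env2 a b) (edge_formula d C) <->
  exists i : 'I_d.+1, exists c,
    [/\ lab a (inr (i, c)), lab b (inl c) & tree_dist p a b (2 * i)].
Proof.
move=> pr Ha Hb ab.
have same i : i <= d -> _ := sat_same_anc_formula Ha Hb lab (i := i).
rewrite sat_bigFOr; split.
- move=> [[i c] _ /= [la [lb [Hs Hns]]]].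
  have id : i <= d by rewrite -ltnS.
  exists i, c; split=> //; apply/(tree_dist_leavesE pr Ha Hb _ ab); split.
    exact/same.
  by move=> E; apply: Hns; apply/(same i.-1 (leq_trans (leq_pred _) id)).
- move=> [i [c [la lb /(tree_dist_leavesE pr Ha Hb _ ab) [Es Ns]]]].
  have id : i <= d by rewrite -ltnS.
  exists (i, c); rewrite ?mem_enum ?inE //=; do 3 split => //.
    exact/same.
  by move/(same i.-1 (leq_trans (leq_pred _) id)).
Qed.

Theorem lemma4 (d : nat) (C : finType) :
  1 <= d ->
  exists nu eta : formula (label d C),
    forall (W : finType) (e : rel W),
      irreflexive e -> symmetric e ->
      forall (V : finType) (r : V) (p : V -> V) (f : W -> V) (col : W -> C),
        @tree_model d C W e V r p f col ->
        let lab := @T1_label d C W e V p f col in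
        (forall a : V, sat r p lab (env2 a a) nu <-> exists x : W, f x = a) /\
        (forall x y : W, x != y ->
           (e x y <-> sat r p lab (env2 (f x) (f y)) eta)).
Proof.
move=> _; exists (vertex_formula d C), (edge_formula d C).
move=> W e e_irr _ V r p f col [[pr _] f_inj f_leaf leaf_depth [M e_M]] lab.
split=> [a|x y xy].
  rewrite sat_vertex_formula; split; first by move=> [c [x [fx _]]]; exists x.
  by move=> [x fx]; exists (col x), x.
have depth_f z : has_depth r p (f z) d by apply/leaf_depth/f_leaf; exists z.
have fxy : f x != f y by apply: contra xy => /eqP/f_inj ->.
rewrite sat_edge_formula //; split=> [exy|[i [c [[x' [/f_inj -> [u [cu [exu du]]]]]]]]].
  have [j jd dxy] := tree_dist_leaves_exists pr (depth_f x) (depth_f y).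
  exists (Ordinal (jd : j < d.+1)), (col y); split=> //.
    by exists x; split=> //; exists y.
  by exists y.
move=> [y' [/f_inj -> cy]] dxy.
have xu : x != u by apply/eqP => ux; rewrite ux e_irr in exu.
by rewrite (e_M x y xy _ dxy) cy -cu -(e_M x u xu _ du).
Qed.
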